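(* Let $\beta>0$ be a constant such that for every connected $P_7$-free graph $G'$ on at least two vertices, every potential maximal clique $\Omega'$ of $G'$ and every probability measure $\mu'$ on $\Omega'$, there is a vertex $v\in V(G')$ with $\mu'(N(v)\cap\Omega')\ge\beta$. Then for every $P_7$-free graph $G$, every potential maximal clique $\Omega$ of $G$, and every efficient dominating set $X$ of $G$, we have $|\Omega\cap X|\le 1/\beta$.
   Context: All graphs are finite, simple and undirected. $P_k$ is the path on $k$ vertices; a graph is $P_k$-free if it has no induced subgraph isomorphic to $P_k$. $N(v)$ is the open neighbourhood. A triangulation of $G$ is a set $F$ of non-edges such that $(V(G),E(G)\cup F)$ is chordal; it is minimal if no proper subset is a triangulation. A potential maximal clique of $G$ is a maximal clique of $(V(G),E(G)\cup F)$ for some minimal triangulation $F$. An efficient dominating set of $G$ is a set $X$ with $|N[v]\cap X|=1$ for every vertex $v$, where $N[v]$ is the closed neighbourhood. (A constant $\beta$ with the stated property exists.) *)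

From HB Require Import structures.
From mathcomp Require Import all_boot all_order all_algebra.
From mathcomp Require Export reals.
Set Implicit Arguments. Unset Strict Implicit. Unset Printing Implicit Defensive.
Import Order.TTheory GRing.Theory Num.Theory.

Definition simple_graph (T : finType) (e : rel T) : Prop :=
  symmetric e /\ irreflexive e.

Definition induced_path (T : finType) (e : rel T) (k : nat) (f : 'I_k -> T) : Prop :=
  injective f /\
  forall i j : 'I_k, e (f i) (f j) = ((val i).+1 == val j) || ((val j).+1 == val i).

Definition Pk_free (k : nat) (T : finType) (e : rel T) : Prop :=
  forall f : 'I_k -> T, ~ induced_path e f.

Definition induced_cycle (T : finType) (e : rel T) (k : nat) (f : 'I_k -> T) : Prop :=
  injective f /\
  forall i j : 'I_k,
    e (f i) (f j) = (val j == (val i).+1 %% k) || (val i == (val j).+1 %% k).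

Definition chordal (T : finType) (e : rel T) : Prop :=
  forall k, 4 <= k -> forall f : 'I_k -> T, ~ induced_cycle e f.

Definition connected (T : finType) (e : rel T) : Prop :=
  forall x y : T, connect e x y.

Definition add_edges (T : finType) (e : rel T) (F : {set T * T}) : rel T :=
  fun x y => e x y || ((x, y) \in F).

(* F is a set of non-edges (stored symmetrically: both orientations of each
   added unordered pair) whose addition yields a chordal graph. *)
Definition triangulation (T : finType) (e : rel T) (F : {set T * T}) : Prop :=
  [/\ forall x y, ((x, y) \in F) = ((y, x) \in F),
      forall x y, (x, y) \in F -> x != y /\ ~~ e x y
    & chordal (add_edges e F)].

Definition minimal_triangulation (T : finType) (e : rel T) (F : {set T * T}) : Prop :=
  triangulation e F /\
  forall F' : {set T * T}, triangulation e F' -> F' \subset F -> F' = F.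

Definition clique (T : finType) (e : rel T) (K : {set T}) : Prop :=
  forall x y, x \in K -> y \in K -> x != y -> e x y.

Definition maximal_clique (T : finType) (e : rel T) (K : {set T}) : Prop :=
  clique e K /\ forall K' : {set T}, clique e K' -> K \subset K' -> K' = K.

Definition potential_maximal_clique (T : finType) (e : rel T) (Om : {set T}) : Prop :=
  exists F : {set T * T}, minimal_triangulation e F /\ maximal_clique (add_edges e F) Om.

Definition nbhd (T : finType) (e : rel T) (v : T) : {set T} := [set u | e v u].
Definition cnbhd (T : finType) (e : rel T) (v : T) : {set T} := v |: nbhd e v.

Definition efficient_dominating_set (T : finType) (e : rel T) (X : {set T}) : Prop :=
  forall v : T, #|cnbhd e v :&: X| = 1%N.

(* A probability measure on the finite set Om, given by point masses mu x (x in Om);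
   values of mu outside Om are irrelevant. *)
Definition prob_measure_on (R : realType) (T : finType) (Om : {set T}) (mu : T -> R) : Prop :=
  (forall x, x \in Om -> 0 <= mu x)%R /\ (\sum_(x in Om) mu x = 1)%R.

Definition measure_of (R : realType) (T : finType) (mu : T -> R) (A : {set T}) : R :=
  (\sum_(x in A) mu x)%R.

From mathcomp Require Import all_boot all_order all_algebra reals.
Set Implicit Arguments. Unset Strict Implicit. Unset Printing Implicit Defensive.
Import Order.TTheory GRing.Theory Num.Theory.
Local Open Scope ring_scope.

(* A minimal triangulation adds no edge between distinct components of G, so a
   potential maximal clique Omega lies inside one component C and stays a
   potential maximal clique of G[C], which is connected and P7-free.  Put the
   uniform measure on Omega n X.  By efficiency every vertex v sees at most one
   vertex of X, so the vertex v given by the hypothesis satisfies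
   beta <= mu(N(v) n Omega) <= 1/|Omega n X|.  When |Omega n X| <= 1 we only need
   beta <= 1, which follows from the hypothesis applied to K2. *)

Lemma induced_cycle_transfer (T1 T2 : finType) (r1 : rel T1) (r2 : rel T2) k
    (f : 'I_k -> T1) (g : 'I_k -> T2) :
  (forall i j, g i = g j -> f i = f j) ->
  (forall i j, r2 (g i) (g j) = r1 (f i) (f j)) ->
  induced_cycle r1 f -> induced_cycle r2 g.
Proof. by move=> gf r21 [f_inj rf]; split=> [i j /gf/f_inj // | i j]; rewrite r21 rf. Qed.

Lemma eq_chordal (T : finType) (r1 r2 : rel T) : r1 =2 r2 -> chordal r1 -> chordal r2.
Proof.
move=> r12 ch k k4 f cyc; apply: (ch k k4 f).
by apply: induced_cycle_transfer cyc => // i j; rewrite r12.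
Qed.

Lemma injective_card_leq (T : finType) k (f : 'I_k -> T) : injective f -> (k <= #|T|)%N.
Proof. by move/leq_card; rewrite card_ord. Qed.

Lemma chordal_card_lt4 (T : finType) (r : rel T) : (#|T| < 4)%N -> chordal r.
Proof.
move=> T_lt4 k k4 f [/injective_card_leq k_le _].
by have := leq_ltn_trans (leq_trans k4 k_le) T_lt4; rewrite ltnn.
Qed.

Lemma Pk_free_card_lt (T : finType) (r : rel T) k : (#|T| < k)%N -> Pk_free k r.
Proof.
by move=> T_lt f [/injective_card_leq k_le _]; have := leq_ltn_trans k_le T_lt; rewrite ltnn.
Qed.

Lemma clique_closed_sub (T : finType) (r : rel T) (C K : {set T}) x0 :
  closed r C -> clique r K -> x0 \in K -> x0 \in C -> K \subset C.
Proof.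
move=> clC cl x0K x0C; apply/subsetP => x xK.
have [<- // | x0x] := eqVneq x0 x.
by rewrite -(clC _ _ (cl _ _ x0K xK x0x)).
Qed.

Lemma eq_clique (T : finType) (r1 r2 : rel T) K : r1 =2 r2 -> clique r1 K -> clique r2 K.
Proof. by move=> r12 cl x y xK yK xy; rewrite -r12; apply: cl. Qed.

Lemma eq_maximal_clique (T : finType) (r1 r2 : rel T) K :
  r1 =2 r2 -> maximal_clique r1 K -> maximal_clique r2 K.
Proof.
move=> r12 [cl max]; split; first exact: eq_clique cl.
by move=> K' /(eq_clique (fun x y => esym (r12 x y))); apply: max.
Qed.

Section InducedSubgraph.

Variables (T : finType) (C : {set T}).

Definition induce (r : rel T) : rel {x : T | x \in C} := fun a b => r (val a) (val b).

Definition induce_set (A : {set T}) : {set {x : T | x \in C}} := [set a | val a \in A].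

Definition induce_pairs (F : {set T * T}) : {set {x : T | x \in C} * {x : T | x \in C}} :=
  [set p | (val p.1, val p.2) \in F].

Definition lift_pairs (F : {set {x : T | x \in C} * {x : T | x \in C}}) : {set T * T} :=
  [set (val p.1, val p.2) | p in F].

Lemma simple_graph_induce r : simple_graph r -> simple_graph (induce r).
Proof. by case=> r_sym r_irr; split=> [a b | a]; [apply: r_sym | apply: r_irr]. Qed.

Lemma Pk_free_induce k r : Pk_free k r -> Pk_free k (induce r).
Proof.
move=> free f [f_inj rf]; apply: (free (val \o f)).
by split=> [i j /val_inj/f_inj // |]; exact: rf.
Qed.

Lemma chordal_induce_in (r r' : rel T) :
  chordal r -> {in C &, r =2 r'} -> chordal (induce r').
Proof.
move=> ch rr' k k4 f cyc; apply: (ch k k4 (val \o f)).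
apply: induced_cycle_transfer cyc => [i j /val_inj // | i j].
by rewrite /induce rr' ?(valP (f i)) ?(valP (f j)).
Qed.

Lemma induced_cycle_induce r k (f : 'I_k -> T) (fC : forall i, f i \in C) :
  induced_cycle r f -> induced_cycle (induce r) (fun i => Sub (f i) (fC i)).
Proof. by apply: induced_cycle_transfer => // i j /(congr1 val). Qed.

Lemma val_induce_set A : val @: induce_set A = A :&: C.
Proof.
apply/setP => x; rewrite inE; apply/imsetP/andP => [[a] | [xA xC]].
  by rewrite inE => aA ->; rewrite aA (valP a).
by exists (Sub x xC); rewrite ?inE SubK.
Qed.

Lemma card_induce_set A : #|induce_set A| = #|A :&: C|.
Proof. by rewrite -val_induce_set card_imset //; exact: val_inj. Qed.

Lemma induce_add_edges e F :
  induce (add_edges e F) =2 add_edges (induce e) (induce_pairs F).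
Proof. by move=> a b; rewrite /add_edges inE. Qed.

Lemma mem_lift_pairs F a b : ((val a, val b) \in lift_pairs F) = ((a, b) \in F).
Proof.
apply/imsetP/idP => [[[a' b'] ab' [/val_inj -> /val_inj ->]] // | ab].
by exists (a, b).
Qed.

Lemma maximal_clique_induce r K :
  maximal_clique r K -> K \subset C -> maximal_clique (induce r) (induce_set K).
Proof.
case=> cl max KC; split=> [a b | K' clK' KK'].
  by rewrite !inE => aK bK ab; apply: cl; rewrite ?(inj_eq val_inj).
have valK' : val @: K' = K.
  apply: max; last first.
    apply/subsetP => x xK; apply/imsetP; exists (Sub x (subsetP KC x xK)) => //.
    by apply: (subsetP KK'); rewrite inE.
  move=> _ _ /imsetP[a aK' ->] /imsetP[b bK' ->].
  by rewrite (inj_eq val_inj); exact: clK'.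
by apply/setP => a; rewrite inE -valK' (mem_imset _ _ val_inj).
Qed.

Lemma card_nbhd_induceI r a (D : {set {x : T | x \in C}}) B :
  (#|nbhd (induce r) a :&: D :&: induce_set B| <= #|nbhd r (val a) :&: B|)%N.
Proof.
apply: (@leq_trans #|induce_set (nbhd r (val a) :&: B)|).
  by apply/subset_leq_card/subsetP => b; rewrite !inE /induce => /andP[/andP[-> _] ->].
by rewrite card_induce_set subset_leq_card // subsetIl.
Qed.

End InducedSubgraph.

Arguments induce {T} C r.
Arguments induce_set {T} C A.
Arguments induce_pairs {T} C F.
Arguments lift_pairs {T} C F.

Lemma induced_cycle_closed (T : finType) (r : rel T) (C : {set T}) k (f : 'I_k -> T) :
  closed r C -> induced_cycle r f -> forall i j, (f i \in C) = (f j \in C).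
Proof.
move=> clC [_ rf] i j; have k_gt0 : (0 < k)%N by apply: leq_ltn_trans (ltn_ord i).
suff side n (n_lt : (n < k)%N) : (f (Ordinal n_lt) \in C) = (f (Ordinal k_gt0) \in C).
  by case: i => n n_lt; case: j => m m_lt; rewrite !side.
elim: n n_lt => [|n IH] n_lt; first by congr (f _ \in C); apply: val_inj.
rewrite -(IH (ltnW n_lt)); apply/esym/clC.
by rewrite rf /= modn_small // eqxx.
Qed.

Lemma chordal_of_induce (T : finType) (r : rel T) (C : {set T}) :
  closed r C -> chordal (induce C r) -> chordal (induce (~: C) r) -> chordal r.
Proof.
move=> clC chC chCc k k4 f cyc.
have i0 : 'I_k := Ordinal (leq_trans (isT : (0 < 4)%N) k4).
case fi0C : (f i0 \in C).
- have fC i : f i \in C by rewrite (induced_cycle_closed clC cyc i i0).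
  exact: chC k k4 _ (induced_cycle_induce fC cyc).
- have fCc i : f i \in ~: C by rewrite inE (induced_cycle_closed clC cyc i i0) fi0C.
  exact: chCc k k4 _ (induced_cycle_induce fCc cyc).
Qed.

Lemma component_closed (T : finType) (e : rel T) x0 :
  symmetric e -> closed e [set y | connect e x0 y].
Proof.
by move=> e_sym y z e_yz; rewrite !inE; exact: (connect_closed (sym_connect_sym e_sym)).
Qed.

Lemma connect_induce (T : finType) (e : rel T) (C : {set T}) (a b : {x | x \in C}) :
  closed e C -> connect e (val a) (val b) -> connect (induce C e) a b.
Proof.
move=> clC /connectP[p]; elim: p a => [a _ /val_inj -> // | z p IH a /= /andP[e_az p_z] b_last].
have zC : z \in C by rewrite -(clC _ _ e_az) (valP a).
by apply: connect_trans (connect1 _) (IH (Sub z zC) _ _); rewrite /induce ?SubK.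
Qed.

Lemma connected_induce_component (T : finType) (e : rel T) x0 :
  symmetric e -> connected (induce [set y | connect e x0 y] e).
Proof.
move=> e_sym; set C := [set y | connect e x0 y].
have x0C : x0 \in C by rewrite inE.
have from_x0 b : connect (induce C e) (Sub x0 x0C) b.
  by apply: connect_induce (component_closed x0 e_sym) _; rewrite SubK -inE (valP b).
move=> a b; apply: connect_trans (from_x0 b).
by rewrite (sym_connect_sym (fun a' b' => e_sym (val a') (val b'))).
Qed.

Section ClosedVertexSet.

Variables (T : finType) (e : rel T) (C : {set T}).
Hypothesis clC : closed e C.

Lemma triangulation_induce F :
  triangulation e F -> triangulation (induce C e) (induce_pairs C F).
Proof.
case=> F_sym F_ne ch; split=> [a b | a b | ]; first by rewrite !inE F_sym.
  by rewrite inE => /F_ne[ab nab]; split=> //; apply: contraNneq ab => ->.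
exact: eq_chordal (induce_add_edges e F) (chordal_induce_in ch (fun _ _ _ _ => erefl)).
Qed.

Lemma minimal_triangulation_closed F :
  minimal_triangulation e F -> closed (add_edges e F) C.
Proof.
(* Dropping the fill edges between C and its complement keeps the graph chordal,
   so by minimality there are none. *)
case=> [[F_sym F_ne ch] F_min].
pose F0 := [set p in F | (p.1 \in C) == (p.2 \in C)].
have F0_cl x y : (x, y) \in F0 -> (x \in C) = (y \in C).
  by rewrite inE => /andP[_ /eqP].
have agree x y : (x \in C) = (y \in C) -> add_edges e F x y = add_edges e F0 x y.
  by move=> xy; rewrite /add_edges inE /= xy eqxx andbT.
suff F0F : F0 = F by move=> x y; rewrite -F0F => /orP[/clC | /F0_cl].
apply: F_min; last by apply/subsetP => p; rewrite inE => /andP[].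
split=> [x y | x y | ]; first by rewrite !inE F_sym eq_sym.
  by rewrite inE => /andP[/F_ne].
apply: (chordal_of_induce (C := C)).
- by move=> x y /orP[/clC | /F0_cl].
- by apply: chordal_induce_in ch _ => x y xC yC; rewrite agree // xC yC.
- apply: chordal_induce_in ch _ => x y; rewrite !inE => /negbTE xC /negbTE yC.
  by rewrite agree // xC yC.
Qed.

Lemma triangulation_lift F F' :
  triangulation e F -> closed (add_edges e F) C -> triangulation (induce C e) F' ->
  triangulation e ([set p in F | p.1 \notin C] :|: lift_pairs C F').
Proof.
case=> F_sym F_ne ch FC [F'_sym F'_ne ch'].
set G := _ :|: _.
have liftC x y : (x, y) \in lift_pairs C F' -> (x \in C) && (y \in C).
  by case/imsetP => -[a b] _ [-> ->]; rewrite (valP a) (valP b).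
have F_cl x y : (x, y) \in F -> (x \in C) = (y \in C).
  by move=> xyF; apply: FC; rewrite /add_edges xyF orbT.
have G_cl : closed (add_edges e G) C.
  move=> x y /orP[/clC // | ]; rewrite !inE => /orP[/andP[xyF _] | /liftC/andP[-> ->] //].
  exact: F_cl.
split.
- suff G_sym x y : (x, y) \in G -> (y, x) \in G by move=> x y; apply/idP/idP; apply: G_sym.
  rewrite !inE /= => /orP[/andP[xyF xC] | /imsetP[[a b] ab [-> ->]]].
    by rewrite -F_sym xyF -(F_cl _ _ xyF) xC.
  by rewrite mem_lift_pairs -F'_sym ab orbT.
- move=> x y; rewrite !inE => /orP[/andP[/F_ne //] | /imsetP[[a b] /F'_ne[ab nab] [-> ->]]].
  by rewrite (inj_eq val_inj).
- apply: chordal_of_induce G_cl _ _.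
    apply: eq_chordal ch' => a b.
    by rewrite /induce /add_edges !inE /= (valP a) andbF mem_lift_pairs.
  apply: chordal_induce_in ch _ => x y; rewrite inE => /negbTE xC _.
  have /negbTE xy_lift : (x, y) \notin lift_pairs C F'.
    by apply/negP => /liftC; rewrite xC.
  by rewrite /add_edges !inE xC xy_lift andbT orbF.
Qed.

Lemma minimal_triangulation_induce F :
  minimal_triangulation e F -> minimal_triangulation (induce C e) (induce_pairs C F).
Proof.
move=> F_min; have FC := minimal_triangulation_closed F_min.
case: F_min => trF F_min; split; first exact: triangulation_induce.
move=> F' trF' F'F; apply/eqP; rewrite eqEsubset F'F /=.
have GF := F_min _ (triangulation_lift trF FC trF').
have {GF}<- : [set p in F | p.1 \notin C] :|: lift_pairs C F' = F.
  apply: GF; apply/subsetP => p; rewrite inE => /orP[ | /imsetP[[a b] ab ->]].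
    by rewrite inE => /andP[].
  by have := subsetP F'F _ ab; rewrite inE.
by apply/subsetP => -[a b]; rewrite !inE /= (valP a) andbF /= mem_lift_pairs.
Qed.

Lemma pmc_sub_closed Om x0 :
  potential_maximal_clique e Om -> x0 \in Om -> x0 \in C -> Om \subset C.
Proof.
case=> F [F_min [cl _]]; exact: clique_closed_sub (minimal_triangulation_closed F_min) cl.
Qed.

Lemma pmc_induce Om :
  potential_maximal_clique e Om -> Om \subset C ->
  potential_maximal_clique (induce C e) (induce_set C Om).
Proof.
case=> F [F_min OmF] OmC; exists (induce_pairs C F); split.
  exact: minimal_triangulation_induce.
exact: eq_maximal_clique (induce_add_edges e F) (maximal_clique_induce OmF OmC).
Qed.

End ClosedVertexSet.

Lemma card_nbhdI_efficient_le1 (T : finType) (e : rel T) (X A : {set T}) v :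
  efficient_dominating_set e X -> A \subset X -> (#|nbhd e v :&: A| <= 1)%N.
Proof. by move=> hX AX; rewrite -(hX v) subset_leq_card // setISS // subsetUr. Qed.

Section Measures.

Variables (R : realType) (T : finType).

Definition uniform_measure (S : {set T}) : T -> R :=
  fun x => if x \in S then #|S|%:R^-1 else 0.

Lemma measure_uniform (S A : {set T}) :
  measure_of (uniform_measure S) A = #|A :&: S|%:R / #|S|%:R.
Proof.
rewrite /measure_of mulrC mulr_natr -sumr_const big_mkcond [RHS]big_mkcond /=.
by apply: eq_bigr => x _; rewrite /uniform_measure inE; case: (x \in A); case: (x \in S).
Qed.

Lemma prob_uniform_measure (S Om : {set T}) :
  S != set0 -> S \subset Om -> prob_measure_on Om (uniform_measure S).
Proof.
move=> S_nz SOm; split=> [x _ | ].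
  by rewrite /uniform_measure; case: ifP => // _; rewrite invr_ge0 ler0n.
rewrite -[LHS]/(measure_of _ Om) measure_uniform (setIidPr SOm) mulfV //.
by rewrite pnatr_eq0 -lt0n card_gt0.
Qed.

Lemma measure_le1 (mu : T -> R) (Om A : {set T}) :
  prob_measure_on Om mu -> A \subset Om -> measure_of mu A <= 1.
Proof.
case=> mu_ge0 mu1 AOm; rewrite -mu1 /measure_of [X in _ <= X](big_setID A) /=.
rewrite (setIidPr AOm) lerDl sumr_ge0 // => x; rewrite inE => /andP[_]; exact: mu_ge0.
Qed.

End Measures.

Definition pmc_nbhd_measure_bound (R : realType) (beta : R) : Prop :=
  forall (T' : finType) (e' : rel T'),
    simple_graph e' -> connected e' -> Pk_free 7 e' -> (1 < #|T'|)%N ->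
    forall (Om' : {set T'}), potential_maximal_clique e' Om' ->
    forall mu' : T' -> R, prob_measure_on Om' mu' ->
    exists v : T', beta <= measure_of mu' (nbhd e' v :&: Om').

Lemma pmc_nbhd_measure_bound_le1 (R : realType) (beta : R) :
  pmc_nbhd_measure_bound beta -> beta <= 1.
Proof.
move=> bound; pose K2 (x y : bool) := x != y.
have K2_simple : simple_graph K2 by split=> [x y | x]; rewrite /K2 ?eqxx // eq_sym.
have K2_connected : connected K2.
  by move=> x y; have [-> // | xy] := eqVneq x y; exact: connect1.
have K2_P7 : Pk_free 7 K2 by apply: Pk_free_card_lt; rewrite card_bool.
have K2_pmc : potential_maximal_clique K2 setT.
  exists set0; split; [split | split].
  - by split=> [x y | x y | ]; rewrite ?inE //; apply: chordal_card_lt4; rewrite card_bool.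
  - by move=> F' _; rewrite subset0 => /eqP.
  - by move=> x y _ _ xy; rewrite /add_edges /K2 xy.
  - by move=> K' _ TK'; apply/eqP; rewrite eqEsubset subsetT.
have card_bool_gt1 : (1 < #|{: bool}|)%N by rewrite card_bool.
have setT_nz : [set: bool] != set0 by apply/set0Pn; exists true.
have mu_prob := prob_uniform_measure R setT_nz (subxx [set: bool]).
have [v] := bound _ K2 K2_simple K2_connected K2_P7 card_bool_gt1 _ K2_pmc _ mu_prob.
by move/le_trans; apply; apply: measure_le1 mu_prob (subsetIr _ _).
Qed.

Theorem lemma3 (R : realType) (beta : R) (hbeta : 0 < beta)
  (Hbeta : forall (T' : finType) (e' : rel T'),
      simple_graph e' -> connected e' -> Pk_free 7 e' -> (1 < #|T'|)%N ->
      forall (Om' : {set T'}), potential_maximal_clique e' Om' ->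
      forall mu' : T' -> R, prob_measure_on Om' mu' ->
      exists v : T', beta <= measure_of mu' (nbhd e' v :&: Om'))
  (T : finType) (e : rel T) (hG : simple_graph e) (hP7 : Pk_free 7 e)
  (Om : {set T}) (hOm : potential_maximal_clique e Om)
  (X : {set T}) (hX : efficient_dominating_set e X) :
  (#|Om :&: X|)%:R <= beta^-1.
Proof.
set k := #|Om :&: X|.
have [k_le1 | k_gt1] := leqP k 1.
  apply: (@le_trans _ _ 1); first by rewrite lern1.
  by rewrite invf_ge1 // (pmc_nbhd_measure_bound_le1 Hbeta).
have [x0 /setIP[x0Om _]] : exists x0, x0 \in Om :&: X.
  by apply/set0Pn; rewrite -card_gt0 ltnW.
have [e_sym _] := hG.
set C := [set y | connect e x0 y].
have clC : closed e C := component_closed x0 e_sym.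
have x0C : x0 \in C by rewrite inE.
have OmC : Om \subset C := pmc_sub_closed clC hOm x0Om x0C.
set S := induce_set C (Om :&: X).
have cardS : #|S| = k by rewrite card_induce_set (setIidPl (subset_trans (subsetIl _ _) OmC)).
have S_nz : S != set0 by rewrite -card_gt0 cardS ltnW.
have S_Om : S \subset induce_set C Om by apply/subsetP => a; rewrite !inE => /andP[].
have sub_gt1 : (1 < #|{: {x : T | x \in C}}|)%N.
  by rewrite -cardS in k_gt1; exact: leq_trans k_gt1 (max_card _).
have [v] := Hbeta _ _ (simple_graph_induce _ hG) (connected_induce_component e_sym)
  (Pk_free_induce hP7) sub_gt1 _ (pmc_induce clC hOm OmC) _ (prob_uniform_measure R S_nz S_Om).
rewrite measure_uniform cardS => beta_le.
have hits_le1 : (#|nbhd (induce C e) v :&: induce_set C Om :&: S| <= 1)%N.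
  exact: leq_trans (card_nbhd_induceI _ _ _ _) (card_nbhdI_efficient_le1 _ hX (subsetIr _ _)).
have beta_le_inv : beta <= k%:R^-1.
  apply: le_trans beta_le _; rewrite -[leRHS]mul1r ler_wpM2r ?invr_ge0 ?ler0n //.
  by rewrite lern1.
by rewrite -[k%:R]invrK lef_pV2 ?posrE ?invr_gt0 ?ltr0n // ltnW.
Qed.
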